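(* Let $a\in\overline{\mathbb{F}}_2^*$ and let $n>1$ be an odd integer. Then: (i) $0$ is the unique critical value of $X^n$, and $\mathcal{R}_{X^n}(0)=[n]$, where $0$ is the unique root of $X^n$; (ii) $0$ is the unique critical value of $f(X):=D_n(X,a)$, and $\mathcal{R}_f(0)$ consists of one $1$ and $(n-1)/2$ copies of $2$, where $0$ is the unique root of $f(X)$ with ramification index $1$.
   Context: For a field $K$, $a\in K$ and positive integer $n$, the Dickson polynomial $D_n(X,a)\in K[X]$ is the unique polynomial with $D_n(X+a/X,a)=X^n+a^n/X^n$; explicitly $D_n(X,a)=\sum_{i=0}^{\lfloor n/2\rfloor}\frac{n}{n-i}\binom{n-i}{i}(-a)^iX^{n-2i}$. For nonconstant $f(X)\in K[X]$, a critical point is $c\in\overline{K}$ with $f'(c)=0$, and a critical value is $f(c)$ for a critical point $c$. The ramification index $e_f(c)$ is the multiplicity of $c$ as a root of $f(X)-f(c)$, and the ramification multiset $\mathcal{R}_f(d)$ for $d\in\overline{K}$ is the multiset of multiplicities of the roots of $f(X)-d$ in $\overline{K}$. *)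

From HB Require Import structures.
From mathcomp Require Import all_boot all_order all_algebra.
Set Implicit Arguments. Unset Strict Implicit. Unset Printing Implicit Defensive.
Import GRing.Theory.
Local Open Scope ring_scope.

(* The rational coefficient n/(n-i) C(n-i,i) is an integer; we compute it in
   nat as (n * C(n-i,i)) %/ (n-i) (exact division) and cast it into K. *)
Definition dickson (K : nzRingType) (n : nat) (a : K) : {poly K} :=
  \sum_(i < n./2.+1)
     (((n * 'C(n - i, i)) %/ (n - i))%N%:R * (- a) ^+ i) *: 'X^(n - 2 * i).

Definition is_critical_value (K : nzRingType) (f : {poly K}) (d : K) : Prop :=
  exists c : K, (f^`()).[c] = 0 /\ f.[c] = d.

Definition ram_index (K : fieldType) (f : {poly K}) (c : K) : nat :=
  mup c (f - (f.[c])%:P).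

(* m represents (as a multiset, i.e. up to permutation) the ramification
   multiset R_f(d): the multiplicities of the (distinct) roots of f(X) - d. *)
Definition is_ram_mset (K : fieldType) (f : {poly K}) (d : K) (m : seq nat)
  : Prop :=
  exists s : seq K,
    [/\ uniq s,
        (forall c, root (f - d%:P) c = (c \in s)) &
        perm_eq [seq mup c (f - d%:P) | c <- s] m].

(* K is algebraic over its prime field F_2 = {0,1} (K of characteristic 2). *)
Definition algebraic_over_F2 (K : nzRingType) : Prop :=
  forall x : K, exists p : {poly K},
    [/\ p != 0, all (fun c => (c == 0) || (c == 1)) p & root p x].

From mathcomp Require Import all_boot all_order all_algebra.
From mathcomp Require Import cyclic separable cyclotomic.
From mathcomp Require Import zify ring.
Set Implicit Arguments. Unset Strict Implicit. Unset Printing Implicit Defensive.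
Import GRing.Theory.
Local Open Scope ring_scope.

(* D_n(X, a) satisfies D_{n+2} = X D_{n+1} - a D_n, hence
   D_n(u + v, uv) = u^n + v^n over any commutative ring.  In characteristic 2
   write n = 2m + 1 and a = b^2: squaring is additive and fixes the integer
   coefficients, so the defining sum is D_n(X, a) = X g(X)^2 with g monic of
   degree m.  For a primitive n-th root of unity z, taking u = b z^k and
   v = b z^-k shows that the m distinct nonzero elements b (z^k + z^-k),
   1 <= k <= m, are roots of D_n, hence of g.  Thus
   D_n = X \prod_k (X - b (z^k + z^-k))^2, and since D_n' = g^2 the critical
   points are exactly the double roots, all lying over the critical value 0. *)

Definition dickson_coef (n i : nat) : nat := (n * 'C(n - i, i)) %/ (n - i).

Section DicksonCoef.
Local Open Scope nat_scope.

Lemma dickson_coef0 n : 0 < n -> dickson_coef n 0 = 1.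
Proof. by move=> n_gt0; rewrite /dickson_coef bin0 muln1 subn0 divnn n_gt0. Qed.

Lemma dickson_coef_small n i : n < i.*2 -> dickson_coef n i = 0.
Proof. by move=> n_lt; rewrite /dickson_coef bin_small ?muln0 ?div0n //; lia. Qed.

Lemma dickson_coefE p j :
  dickson_coef (p.+1 + j.+1) j.+1 = 'C(p.+1, j.+1) + 'C(p, j).
Proof.
rewrite /dickson_coef addnK.
have -> : (p.+1 + j.+1) * 'C(p.+1, j.+1) = p.+1 * ('C(p.+1, j.+1) + 'C(p, j)).
  by rewrite mulnDl mulnDr (mul_bin_diag p.+1).
by rewrite mulKn.
Qed.

Lemma dickson_coefSS n i : 0 < n ->
  dickson_coef n.+2 i.+1 = dickson_coef n.+1 i.+1 + dickson_coef n i.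
Proof.
move=> n_gt0; have [i_lt_n|n_le_i] := ltnP i n; last first.
  by rewrite !dickson_coef_small //; lia.
have [k ->] : exists k, n = k.+1 + i by exists (n - i).-1; lia.
have -> : (k.+1 + i).+2 = k.+2 + i.+1 by lia.
have -> : (k.+1 + i).+1 = k.+1 + i.+1 by lia.
rewrite !dickson_coefE; case: i {i_lt_n n_gt0} => [|i].
  by rewrite addn0 dickson_coef0 // !bin0 !bin1; lia.
by rewrite dickson_coefE !binS; lia.
Qed.

End DicksonCoef.

Section DicksonRecurrence.
Variable R : comNzRingType.

Lemma dickson_widen (a : R) n N : (n < N.*2)%N ->
  dickson n a =
    \sum_(i < N) ((dickson_coef n i)%:R * (- a) ^+ i) *: 'X^(n - 2 * i).
Proof.
move=> n_lt; have half_lt : (n./2 < N)%N by have := odd_double_half n; lia.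
rewrite /dickson (big_ord_widen _
  (fun i => ((dickson_coef n i)%:R * (- a) ^+ i) *: 'X^(n - 2 * i)) half_lt).
rewrite big_mkcond /=; apply: eq_bigr => i _; case: ifP => // /negbT.
rewrite -leqNgt => i_gt; rewrite dickson_coef_small ?mul0r ?scale0r //.
have := odd_double_half n; lia.
Qed.

Lemma dickson1 (a : R) : dickson 1 a = 'X.
Proof. by rewrite /dickson big_ord1 /= expr0 mulr1 scale1r. Qed.

Lemma dickson2 (a : R) : dickson 2 a = 'X^2 - (a *+ 2)%:P.
Proof.
rewrite /dickson big_ord_recl big_ord1 /= expr0 mulr1 scale1r expr1 expr0.
rewrite /bump /= (_ : (2 * 'C(1, 1)) %/ 1 = 2)%N // alg_polyC.
by rewrite mulrN mulr_natl polyCN.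
Qed.

Lemma dicksonSS (a : R) n : (0 < n)%N ->
  dickson n.+2 a = 'X * dickson n.+1 a - a *: dickson n a.
Proof.
move=> n_gt0; rewrite (@dickson_widen a n.+2 n.+2) ?(@dickson_widen a n.+1 n.+2)
  ?(@dickson_widen a n n.+1); try lia.
rewrite big_ord_recl [in RHS]big_ord_recl mulrDr -addrA mulr_sumr scaler_sumr.
rewrite -sumrB; congr (_ + _).
  by rewrite !dickson_coef0 // !expr0 !mulr1 !subn0 !scale1r exprS.
apply: eq_bigr => i _ /=; rewrite /bump /= !add1n dickson_coefSS // natrD.
have -> : (n.+2 - 2 * i.+1 = n - 2 * i)%N by lia.
have [i_lt|n_le] := ltnP (2 * i) n.
  have -> : (n - 2 * i = (n.+1 - 2 * i.+1).+1)%N by lia.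
  rewrite -scalerAr -exprS scalerA -scalerBl exprS; congr (_ *: _); ring.
rewrite (@dickson_coef_small n.+1 i.+1); last by lia.
rewrite !mul0r !scale0r mulr0 add0r sub0r scalerA -scaleNr exprS.
by congr (_ *: _); ring.
Qed.

Lemma dickson_horner_add (u v : R) n : (0 < n)%N ->
  (dickson n (u * v)).[u + v] = u ^+ n + v ^+ n.
Proof.
case: n => // n _.
suff /(_ n)[] : forall k, (dickson k.+1 (u * v)).[u + v] = u ^+ k.+1 + v ^+ k.+1
  /\ (dickson k.+2 (u * v)).[u + v] = u ^+ k.+2 + v ^+ k.+2 by [].
elim=> [|k [IH1 IH2]].
  by rewrite dickson1 dickson2 !hornerE; split; ring.
split=> //; rewrite dicksonSS // !hornerE IH1 IH2.
by rewrite !exprS; ring.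
Qed.

End DicksonRecurrence.

Definition dickson_sqrt (R : nzRingType) (b : R) (m : nat) : {poly R} :=
  \sum_(i < m.+1) ((dickson_coef m.*2.+1 i)%:R * b ^+ i) *: 'X^(m - i).

Section DicksonSqrt.
Variables (R : comNzRingType) (b : R) (m : nat).

Lemma size_dickson_sqrt_subXn : (size (dickson_sqrt b m - 'X^m)%R <= m)%N.
Proof.
rewrite /dickson_sqrt big_ord_recl dickson_coef0 // mulr1 scale1r subn0.
rewrite addrC addKr; apply: (leq_trans (size_sum _ _ _)).
apply/bigmax_leqP => i _.
rewrite (leq_trans (size_scale_leq _ _)) // size_polyXn /= /bump add1n.
by have := ltn_ord i; lia.
Qed.

Lemma size_dickson_sqrt : size (dickson_sqrt b m) = m.+1.
Proof.
rewrite -[dickson_sqrt b m](subrK 'X^m) addrC size_polyDl size_polyXn //.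
by rewrite ltnS size_dickson_sqrt_subXn.
Qed.

Lemma dickson_sqrt_monic : dickson_sqrt b m \is monic.
Proof.
rewrite monicE -[dickson_sqrt b m](subrK 'X^m) addrC lead_coefDl ?lead_coefXn //.
by rewrite size_polyXn ltnS size_dickson_sqrt_subXn.
Qed.

Hypothesis pchar2 : (2 \in [pchar R])%N.

Lemma dickson_odd_pchar2 :
  dickson m.*2.+1 (b ^+ 2) = 'X * dickson_sqrt b m ^+ 2.
Proof.
have pchar2_poly : (2 \in [pchar {poly R}])%N by rewrite pchar_poly.
rewrite /dickson /= uphalf_double -(pFrobenius_autE pchar2_poly) rmorph_sum.
rewrite mulr_sumr; apply: eq_bigr => i _.
rewrite /= pFrobenius_autE exprZn -scalerAr -exprM -exprS.
have -> : (m.*2.+1 - 2 * i = ((m - i) * 2).+1)%N by have := ltn_ord i; lia.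
rewrite exprMn -[_%:R ^+ 2](pFrobenius_autE pchar2) pFrobenius_aut_nat.
by rewrite (GRing.oppr_pchar2 pchar2) exprAC.
Qed.

End DicksonSqrt.

Lemma deriv_X_mul_sqr_pchar2 (R : comNzRingType) (p : {poly R}) :
  (2 \in [pchar R])%N -> ('X * p ^+ 2)^`() = p ^+ 2.
Proof.
move=> pchar2.
have pchar2_poly : (2 \in [pchar {poly R}])%N by rewrite pchar_poly.
by rewrite derivM derivX mul1r deriv_exp (mulrn_pchar pchar2_poly) mulr0 addr0.
Qed.

Lemma prim_expr_neq1 (R : idomainType) n (z : R) k :
  n.-primitive_root z -> (0 < k < n)%N -> z ^+ k != 1.
Proof.
by move=> z_prim /andP[k_gt0 k_lt_n]; rewrite -(prim_order_dvd z_prim) gtnNdvd.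
Qed.

Lemma closed_prim_root_exists (F : closedFieldType) n :
  (0 < n)%N -> n%:R != 0 :> F -> exists z : F, n.-primitive_root z.
Proof.
move=> n_gt0 n_neq0; pose p : {poly F} := 'X^n - 1.
have [r Dp] := closed_field_poly_normal p.
rewrite (monicP _) ?monicXnsubC // scale1r in Dp.
have r_unity : all n.-unity_root r.
  by apply/allP=> z; rewrite -root_prod_XsubC -Dp.
have size_r : (n < (size r).+1)%N.
  by rewrite -(size_prod_XsubC r id) -Dp size_XnsubC.
have [|z] := hasP (has_prim_root n_gt0 r_unity _ size_r); last by exists z.
by rewrite -separable_prod_XsubC -Dp separable_Xn_sub_1.
Qed.

Section PrimRootPchar2.
Variables (F : fieldType) (m : nat) (z : F).
Hypotheses (pchar2 : (2 \in [pchar F])%N) (z_prim : m.*2.+1.-primitive_root z).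

Lemma prim_root_addV_neq0 k : (0 < k <= m)%N -> z ^+ k + z ^- k != 0.
Proof.
move=> k_in; have z_neq0 : z != 0 by rewrite (prim_root_eq0 z_prim).
have : z ^+ (k + k) != 1 by apply: (prim_expr_neq1 z_prim); lia.
apply: contraNneq => sum0; rewrite exprD -subr_eq0 (GRing.subr_pchar2 pchar2).
by rewrite -[0](mulr0 (z ^+ k)) -sum0 mulrDr divff ?expf_neq0.
Qed.

Lemma prim_root_addV_inj j k : (0 < j <= m)%N -> (0 < k <= m)%N ->
  z ^+ j + z ^- j = z ^+ k + z ^- k -> j = k.
Proof.
move=> j_in k_in eq_jk; have z_neq0 : z != 0 by rewrite (prim_root_eq0 z_prim).
have : (z ^+ j - z ^+ k) * (z ^+ (j + k) - 1) = 0.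
  have -> : (z ^+ j - z ^+ k) * (z ^+ (j + k) - 1) =
      z ^+ j * z ^+ k * ((z ^+ j + z ^- j) - (z ^+ k + z ^- k)).
    by rewrite exprD; field; rewrite !expf_neq0.
  by rewrite eq_jk subrr mulr0.
move/eqP; rewrite mulf_eq0 !subr_eq0 => /orP[].
  by rewrite (eq_prim_root_expr z_prim) !modn_small => [/eqP||]; lia.
by apply: contraTeq => _; apply: (prim_expr_neq1 z_prim); lia.
Qed.

End PrimRootPchar2.

Definition dickson_sqrt_roots (F : fieldType) (b z : F) (m : nat) : seq F :=
  [seq b * (z ^+ k + z ^- k) | k <- iota 1 m].

Section DicksonSqrtRoots.
Variables (F : fieldType) (b z : F) (m : nat).
Hypotheses (pchar2 : (2 \in [pchar F])%N) (b_neq0 : b != 0).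
Hypothesis z_prim : m.*2.+1.-primitive_root z.
Local Notation rs := (dickson_sqrt_roots b z m).

Lemma size_dickson_sqrt_roots : size rs = m.
Proof. by rewrite size_map size_iota. Qed.

Lemma dickson_sqrt_roots_uniq : uniq rs.
Proof.
rewrite map_inj_in_uniq ?iota_uniq // => j k; rewrite !mem_iota => j_in k_in.
by move/(mulfI b_neq0)/(prim_root_addV_inj pchar2 z_prim); apply; lia.
Qed.

Lemma dickson_sqrt_roots_neq0 : 0 \notin rs.
Proof.
apply/mapP => -[k]; rewrite mem_iota => k_in /esym/eqP.
rewrite mulf_eq0 (negbTE b_neq0).
by rewrite (negbTE (prim_root_addV_neq0 pchar2 z_prim k_in)).
Qed.

Lemma root_dickson_prim k :
  root (dickson m.*2.+1 (b ^+ 2)) (b * (z ^+ k + z ^- k)).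
Proof.
have zk_neq0 : z ^+ k != 0 by rewrite expf_neq0 // (prim_root_eq0 z_prim).
have zkn : (z ^+ k) ^+ m.*2.+1 = 1.
  by rewrite -exprM mulnC exprM (prim_expr_order z_prim) expr1n.
have -> : b ^+ 2 = (b * z ^+ k) * (b * z ^- k) by rewrite mulrACA divff // mulr1.
rewrite rootE mulrDr dickson_horner_add // !exprMn exprVn zkn invr1 mulr1.
by rewrite (GRing.addrr_pchar2 pchar2).
Qed.

Lemma dickson_sqrtE : dickson_sqrt b m = \prod_(y <- rs) ('X - y%:P).
Proof.
have roots : all (root (dickson_sqrt b m)) rs.
  apply/allP => y y_in; have /mapP[k _ y_def] := y_in.
  have y_neq0 : y != 0 by apply: contraNneq dickson_sqrt_roots_neq0 => <-.
  have := root_dickson_prim k; rewrite -y_def (dickson_odd_pchar2 _ _ pchar2).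
  by rewrite rootM rootX (negbTE y_neq0) /= !rootE horner_exp expf_eq0.
rewrite [LHS](all_roots_prod_XsubC _ roots) ?uniq_rootsE
  ?dickson_sqrt_roots_uniq //.
  by rewrite (monicP (dickson_sqrt_monic _ _)) scale1r.
by rewrite size_dickson_sqrt size_dickson_sqrt_roots.
Qed.

End DicksonSqrtRoots.

Lemma dickson_odd_factor_pchar2 (F : closedFieldType) (a : F) m :
  (2 \in [pchar F])%N -> a != 0 ->
  exists rs : seq F, [/\ uniq rs, 0 \notin rs, size rs = m &
    dickson m.*2.+1 a = 'X * (\prod_(y <- rs) ('X - y%:P)) ^+ 2].
Proof.
move=> pchar2 a_neq0.
have [b sqr_b] : exists b : F, b ^+ 2 = a.
  have /closed_rootP[b] : size ('X^2 - a%:P) != 1%N by rewrite size_XnsubC.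
  by rewrite rootE !hornerE subr_eq0 => /eqP; exists b.
have b_neq0 : b != 0 by apply: contraNneq a_neq0 => b0; rewrite -sqr_b b0 expr0n.
have [z z_prim] : exists z : F, m.*2.+1.-primitive_root z.
  apply: closed_prim_root_exists => //.
  by rewrite -(GRing.natr_mod_pchar pchar2) modn2 /= odd_double oner_neq0.
exists (dickson_sqrt_roots b z m); split.
- exact: dickson_sqrt_roots_uniq.
- exact: dickson_sqrt_roots_neq0.
- exact: size_dickson_sqrt_roots.
- rewrite -sqr_b (dickson_odd_pchar2 _ _ pchar2).
  by rewrite (dickson_sqrtE pchar2 b_neq0 z_prim).
Qed.

Section XMulSqr.
Variables (F : fieldType) (rs : seq F).
Hypotheses (rs_uniq : uniq rs) (rs_neq0 : 0 \notin rs).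
Local Notation g := (\prod_(y <- rs) ('X - y%:P)).
Local Notation f := ('X * g ^+ 2).

Lemma X_mul_sqr_prodE : f = \prod_(y <- 0 :: rs ++ rs) ('X - y%:P).
Proof. by rewrite big_cons big_cat polyC0 subr0 expr2. Qed.

Lemma root_X_mul_sqr c : root f c = (c == 0) || (c \in rs).
Proof. by rewrite X_mul_sqr_prodE root_prod_XsubC inE mem_cat orbb. Qed.

Lemma mup_X_mul_sqr c : mup c f = ((c == 0%R) + 2 * (c \in rs))%N.
Proof.
rewrite X_mul_sqr_prodE mu_prod_XsubC /= count_cat count_uniq_mem //.
by rewrite eq_sym mul2n addnn.
Qed.

Lemma X_mul_sqr_ram_mset : is_ram_mset f 0 (1%N :: nseq (size rs) 2%N).
Proof.
exists (0 :: rs); rewrite polyC0 subr0; split.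
- by rewrite /= rs_neq0.
- by move=> c; rewrite root_X_mul_sqr inE.
- rewrite /= mup_X_mul_sqr eqxx (negbTE rs_neq0) /=.
  have /all_pred1P -> : all (pred1 2%N) [seq mup c f | c <- rs].
    apply/allP => _ /mapP[c c_in ->]; rewrite /= mup_X_mul_sqr c_in.
    by have /negbTE -> : c != 0 by apply: contraNneq rs_neq0 => <-.
  by rewrite size_map.
Qed.

Lemma X_mul_sqr_simple_root c : root f c /\ ram_index f c = 1%N <-> c = 0.
Proof.
rewrite /ram_index; split => [[f_c]|->].
  rewrite (rootP f_c) polyC0 subr0 mup_X_mul_sqr.
  case: (eqVneq c 0) => // c_neq0; move: f_c.
  by rewrite root_X_mul_sqr (negbTE c_neq0) /= => ->.
have f_0 : root f 0 by rewrite root_X_mul_sqr eqxx.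
by rewrite f_0 (rootP f_0) polyC0 subr0 mup_X_mul_sqr eqxx (negbTE rs_neq0).
Qed.

Hypothesis pchar2 : (2 \in [pchar F])%N.

Lemma X_mul_sqr_critical_value d :
  rs != [::] -> is_critical_value f d <-> d = 0.
Proof.
move=> rs_nil; rewrite /is_critical_value (deriv_X_mul_sqr_pchar2 _ pchar2).
have f_crit c : (g ^+ 2).[c] = 0 -> f.[c] = 0.
  by move=> g2_c; rewrite hornerM g2_c mulr0.
split=> [[c [/f_crit f_c <-]] // | ->].
have [y y_in] : exists y, y \in rs.
  by case: rs rs_nil => // y s _; exists y; rewrite mem_head.
have g2_y : (g ^+ 2).[y] = 0.
  by rewrite horner_exp (rootP (_ : root g y)) ?expr0n // root_prod_XsubC.
by exists y; split; [|apply: f_crit].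
Qed.

End XMulSqr.

Section PowerMap.
Variables (F : fieldType) (n : nat).

Lemma Xn_critical_value d : (1 < n)%N -> n%:R != 0 :> F ->
  is_critical_value ('X^n : {poly F}) d <-> d = 0.
Proof.
move=> n_gt1 n_neq0; rewrite /is_critical_value derivXn.
have n_eq0F : (n == 0)%N = false by lia.
have n1_eq0F : (n.-1 == 0)%N = false by lia.
split=> [[c [c_crit <-]] | ->]; last first.
  by exists 0; rewrite hornerMn !hornerXn !expr0n n_eq0F n1_eq0F mul0rn.
move: c_crit; rewrite hornerMn hornerXn -mulr_natl => /eqP.
rewrite mulf_eq0 (negbTE n_neq0) expf_eq0 /= => /andP[_ /eqP ->].
by rewrite hornerXn expr0n n_eq0F.
Qed.

Hypothesis n_gt0 : (0 < n)%N.

Lemma root_Xn (c : F) : root 'X^n c = (c == 0).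
Proof. by rewrite rootE hornerXn expf_eq0 n_gt0. Qed.

Lemma Xn_ram_mset : is_ram_mset ('X^n : {poly F}) 0 [:: n].
Proof.
exists [:: 0]; rewrite polyC0 subr0; split => //.
- by move=> c; rewrite root_Xn inE.
- by rewrite /= -[X in mup _ (X ^+ _)]subr0 -polyC0 mup_XsubCX eqxx.
Qed.

End PowerMap.

Theorem lemma2p19 (K : closedFieldType) (hchar : 2%N \in [pchar K])
  (halg : algebraic_over_F2 K) (a : K) (ha : a != 0) (n : nat)
  (hn1 : (1 < n)%N) (hodd : odd n) :
  ((forall d : K, is_critical_value ('X^n : {poly K}) d <-> d = 0)
   /\ is_ram_mset ('X^n : {poly K}) 0 [:: n]
   /\ (forall c : K, root ('X^n : {poly K}) c <-> c = 0))
  /\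
  ((forall d : K, is_critical_value (dickson n a) d <-> d = 0)
   /\ is_ram_mset (dickson n a) 0 (1%N :: nseq (n.-1)./2 2%N)
   /\ (forall c : K, (root (dickson n a) c /\ ram_index (dickson n a) c = 1%N)
                     <-> c = 0)).
Proof.
have n_gt0 : (0 < n)%N by lia.
have n_neq0 : n%:R != 0 :> K.
  by rewrite -(GRing.natr_mod_pchar hchar) modn2 hodd oner_neq0.
split.
  split; first by move=> d; apply: Xn_critical_value.
  split; first exact: Xn_ram_mset.
  by move=> c; rewrite root_Xn //; split=> [/eqP | ->].
have [m n_eq] : exists m, n = m.*2.+1.
  by exists n./2; rewrite -[n in LHS]odd_double_half hodd.
have [rs [rs_uniq rs_neq0 size_rs D_eq]] := dickson_odd_factor_pchar2 m hchar ha.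
have rs_nil : rs != [::] by rewrite -size_eq0 size_rs; lia.
rewrite n_eq D_eq /= doubleK -size_rs.
split; first by move=> d; apply: X_mul_sqr_critical_value.
split; first exact: X_mul_sqr_ram_mset.
exact: X_mul_sqr_simple_root.
Qed.
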